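(* Fix a monomial order on $S$. Let $J,E$ be ideals of $S$ and let $\mathcal G_J$ be a Gröbner basis of $J$. The following are equivalent: (a) $E$ is S-nice with respect to $\mathcal G_J$; (b) for every Gröbner basis $\mathcal G_E$ of $E$, and every $f\in\mathcal G_J$, $g\in\mathcal G_E$, one has $S(f,g)\in E$; (c) there exists a Gröbner basis $\mathcal G_E$ of $E$ such that $S(f,g)\in E$ for all $f\in\mathcal G_J$ and $g\in\mathcal G_E$.
   Context: $K$ is a field and $S=K[x_1,\ldots,x_n]$ with a fixed monomial order. For $0\neq f\in S$, $\mathrm{in}(f)$ denotes its leading monomial and $\mathrm{LT}(f)$ its leading term. For nonzero $f,g\in S$ the S-polynomial is $S(f,g)=\frac{\mathrm{lcm}(\mathrm{in}(f),\mathrm{in}(g))}{\mathrm{LT}(f)}f-\frac{\mathrm{lcm}(\mathrm{in}(f),\mathrm{in}(g))}{\mathrm{LT}(g)}g$. Given a Gröbner basis $\mathcal G_J$ of an ideal $J$, an ideal $E$ is called S-nice with respect to $\mathcal G_J$ if $S(f,g)\in E$ for all $f\in\mathcal G_J$ and all nonzero $g\in E$. *)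

From HB Require Import structures.
From mathcomp Require Import all_boot all_order all_algebra.
From mathcomp Require Import mpoly.
Set Implicit Arguments. Unset Strict Implicit. Unset Printing Implicit Defensive.
Import GRing.Theory.
Local Open Scope ring_scope.

Section GB.
Variables (K : fieldType) (n : nat).
Local Notation S := {mpoly K[n]}.
Local Notation mon := 'X_{1..n}.

Definition monomial_order (le : rel mon) : Prop :=
  [/\ reflexive le, antisymmetric le, transitive le, total le &
   [/\ (forall m1 m2 m : mon, le m1 m2 -> le (m1 + m)%MM (m2 + m)%MM) &
      well_founded (fun a b : mon => le a b && (a != b))]].

Definition mon_max (le : rel mon) (m acc : mon) : mon := if le acc m then m else acc.

(* in(f): the largest monomial in the support of f (meaningful for f != 0). *)
Definition lm (le : rel mon) (f : S) : mon :=
  let s := msupp f in foldr (mon_max le) (head 0%MM s) (behead s).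

Definition lc (le : rel mon) (f : S) : K := f@_(lm le f).
Definition LT (le : rel mon) (f : S) : S := lc le f *: 'X_[lm le f].

Definition spoly (le : rel mon) (f g : S) : S :=
  let L := mlcm (lm le f) (lm le g) in
  ((lc le f)^-1 *: 'X_[(L - lm le f)%MM]) * f
  - ((lc le g)^-1 *: 'X_[(L - lm le g)%MM]) * g.

Definition is_ideal (I : S -> Prop) : Prop :=
  [/\ I 0, (forall a b, I a -> I b -> I (a + b)) & (forall r a, I a -> I (r * a))].

Definition ideal_gen (A : S -> Prop) : S -> Prop :=
  fun f => forall I, is_ideal I -> (forall a, A a -> I a) -> I f.

Definition initial_ideal (le : rel mon) (J : S -> Prop) : S -> Prop :=
  ideal_gen (fun m => exists f, [/\ J f, f != 0 & m = 'X_[lm le f]]).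

Definition groebner_basis (le : rel mon) (J : S -> Prop) (G : seq S) : Prop :=
  (forall g, g \in G -> J g /\ g != 0) /\
  (forall f, initial_ideal le J f <->
             ideal_gen (fun m => exists2 g, g \in G & m = 'X_[lm le g]) f).

Definition S_nice (le : rel mon) (GJ : seq S) (E : S -> Prop) : Prop :=
  forall f g, f \in GJ -> E g -> g != 0 -> E (spoly le f g).

End GB.

From HB Require Import structures.
From mathcomp Require Import all_boot all_order all_algebra.
From mathcomp Require Import mpoly.
From Stdlib Require Import Classical.
Set Implicit Arguments. Unset Strict Implicit. Unset Printing Implicit Defensive.
Import GRing.Theory.

(* (a) -> (b) is immediate, since a Groebner basis consists of nonzero
   elements of E, and (b) -> (c) only needs SOME Groebner basis of E to exist.
   For the latter we prove Dickson's lemma on exponent vectors (as sequences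
   of naturals): every set of exponent vectors has finitely many elements
   below which all others lie.  Taking leading monomials of nonzero elements
   of E, this yields a finite "leading-monomial cover" of E, and we show that
   a finite subset of E \ {0} is a Groebner basis exactly when it is such a
   cover.  The heart of (c) -> (a) is a divisibility computation: if
   in(g) | in(h), the f-half of S(f,h) is a monomial multiple of the f-half
   of S(f,g), which lies in E as soon as S(f,g) and g do.  No property of the
   monomial order is needed; classical logic enters only in Dickson's lemma,
   to decide membership of the empty vector in an arbitrary set. *)

Definition dominated (y x : seq nat) : Prop := forall i, nth 0 y i <= nth 0 x i.

Section Dickson.
Variable n : nat.

Lemma pick_heads (P : seq nat -> Prop) (t : seq (seq nat)) :
  (forall x', x' \in t -> (exists a, P (a :: x')) /\ size x' = n) ->
  exists w : seq (nat * seq nat),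
    (forall p, p \in w -> P (p.1 :: p.2) /\ size p.2 = n) /\
    (forall x', x' \in t -> exists a, (a, x') \in w).
Proof.
elim: t => [|x t IH] H; first by exists [::].
have [[a Pa] sz] := H x (mem_head _ _).
have [w [Hw1 Hw2]] : exists w : seq (nat * seq nat),
    (forall p, p \in w -> P (p.1 :: p.2) /\ size p.2 = n) /\
    (forall x', x' \in t -> exists a, (a, x') \in w).
  by apply: IH => x' hx; apply: H; rewrite in_cons hx orbT.
exists ((a, x) :: w); split.
  by move=> p; rewrite in_cons => /orP [/eqP -> //|]; exact: Hw1.
move=> x'; rewrite in_cons => /orP [/eqP ->|/Hw2 [b hb]].
  by exists a; rewrite mem_head.
by exists b; rewrite in_cons hb orbT.
Qed.

Definition dickson_at (P : seq nat -> Prop) : Prop :=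
  exists s : seq (seq nat),
    (forall x, x \in s -> P x /\ size x = n) /\
    (forall x, P x -> size x = n -> exists2 y, y \in s & dominated y x).

(* Inductive step, first half: assuming Dickson's lemma in length n, the
   points of P of length n.+1 whose first coordinate is below a bound A are
   covered by finitely many points of P (treat each head value separately). *)
Lemma dickson_bounded_head (P : seq nat -> Prop) (A : nat) :
  (forall Q, dickson_at Q) ->
  exists u : seq (seq nat),
    (forall x, x \in u -> P x /\ size x = n.+1) /\
    (forall i x', i < A -> P (i :: x') -> size x' = n ->
       exists2 y, y \in u & dominated y (i :: x')).
Proof.
move=> IH; elim: A => [|B [u [Hu1 Hu2]]]; first by exists [::].
have [s [Hs1 Hs2]] := IH (fun x' => P (B :: x')).
exists (map (cons B) s ++ u); split.
  move=> x; rewrite mem_cat => /orP [/mapP [y hy ->]|/Hu1 //].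
  by have [? ?] := Hs1 y hy; split => //=; congr S.
move=> i x' hi Pi sz; rewrite ltnS leq_eqVlt in hi.
case/orP: hi => [/eqP ei|hi].
  subst i; have [y hy ley] := Hs2 x' Pi sz.
  by exists (B :: y); [rewrite mem_cat map_f | case].
have [y hy ley] := Hu2 i x' hi Pi sz.
by exists y => //; rewrite mem_cat hy orbT.
Qed.

End Dickson.

(* Induction on n: the tails of
   points of P are covered by finitely many tails, each extended by a head;
   points with large heads dominate one of those, points with heads below the
   largest chosen head are handled by [dickson_bounded_head]. *)
Lemma dickson (n : nat) (P : seq nat -> Prop) : dickson_at n P.
Proof.
elim: n P => [|n IH] P.
  case: (classic (P [::])) => HP.
    exists [:: [::]]; split; first by move=> x; rewrite mem_seq1 => /eqP ->.
    by move=> [|//] _ _; exists [::]; rewrite ?mem_head.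
  by exists [::]; split => // -[|//] /HP.
have [t [Ht1 Ht2]] := IH (fun x' => exists a, P (a :: x')).
have [w [Hw1 Hw2]] := pick_heads Ht1.
set A := \max_(p <- w) p.1.
have leA p : p \in w -> p.1 <= A by move=> hp; rewrite /A (bigmaxn_sup_seq _ hp).
have [u [Hu1 Hu2]] := dickson_bounded_head P A IH.
exists (map (fun p => p.1 :: p.2) w ++ u); split.
  move=> x; rewrite mem_cat => /orP [/mapP [p hp ->]|/Hu1 //].
  by have [? ?] := Hw1 p hp; split => //=; congr S.
move=> [//|a x'] Px /= [sz].
case: (ltnP a A) => ha.
  have [y hy ley] := Hu2 a x' ha Px sz.
  by exists y => //; rewrite mem_cat hy orbT.
have [y' hy' ley'] := Ht2 x' (ex_intro _ a Px) sz.
have [b hb] := Hw2 y' hy'.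
exists (b :: y'); first by rewrite mem_cat (map_f (fun p => p.1 :: p.2) hb).
by case=> [|i] //=; exact: leq_trans (leA _ hb) ha.
Qed.

Section Groebner.
Variables (K : fieldType) (n : nat) (le : rel 'X_{1..n}).
Local Notation S := {mpoly K[n]}.
Local Notation mon := 'X_{1..n}.
Local Open Scope ring_scope.

Lemma idealN (E : S -> Prop) (a : S) : is_ideal E -> E a -> E (- a).
Proof. by case=> _ _ HM Ha; rewrite -mulN1r; apply: HM. Qed.

Definition lead_monomials (G : seq S) : S -> Prop :=
  fun m => exists2 g, g \in G & m = 'X_[lm le g].

Definition lm_cover (E : S -> Prop) (G : seq S) : Prop :=
  forall e, E e -> e != 0 -> exists2 g, g \in G & (lm le g <= lm le e)%MM.

Lemma lead_monomials_supp (G : seq S) (p : S) :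
  ideal_gen (lead_monomials G) p ->
  forall m, m \in msupp p -> exists2 g, g \in G & (lm le g <= m)%MM.
Proof.
move=> Hp; apply: (Hp (fun p => forall m, m \in msupp p ->
   exists2 g, g \in G & (lm le g <= m)%MM)).
  split.
  - by move=> m; rewrite msupp0.
  - by move=> a b Ha Hb m /msuppD_le; rewrite mem_cat => /orP [/Ha|/Hb].
  - move=> r a Ha m /msuppM_le /allpairsP [[m1 m2] /= [_ h2 ->]].
    have [g hg leg] := Ha m2 h2; exists g => //.
    by apply: lepm_trans leg _; apply/mnm_lepP => i; rewrite mnmDE leq_addl.
move=> _ [g hg ->] m; rewrite msuppX mem_seq1 => /eqP ->.
by exists g => //; exact: lepm_refl.
Qed.

Lemma groebner_basis_cover (E : S -> Prop) (G : seq S) :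
  groebner_basis le E G -> lm_cover E G.
Proof.
move=> [_ HG] e Ee enz.
have : initial_ideal le E 'X_[lm le e] by move=> I _ HI; apply: HI; exists e.
by move/HG/lead_monomials_supp; apply; rewrite msuppX mem_seq1.
Qed.

Lemma cover_groebner_basis (E : S -> Prop) (G : seq S) :
  (forall g, g \in G -> E g /\ g != 0) -> lm_cover E G ->
  groebner_basis le E G.
Proof.
move=> HG cover; split => // f; split => Hf I HI Hgen; apply: Hf => //.
- move=> _ [e [Ee enz ->]]; have [g hg leg] := cover e Ee enz.
  rewrite -(submK leg) mpolyXD; case: HI => _ _ HIM; apply: HIM.
  by apply: Hgen; exists g.
- by move=> _ [g hg ->]; apply: Hgen; have [? ?] := HG g hg; exists g.
Qed.

(* Every set of polynomials has a finite leading-monomial cover by its own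
   nonzero elements: apply Dickson's lemma to the exponent vectors of the
   leading monomials. *)
Lemma lm_cover_exists (E : S -> Prop) :
  exists G, (forall g, g \in G -> E g /\ g != 0) /\ lm_cover E G.
Proof.
pose exps (e : S) : seq nat := tval (multinom_val (lm le e)).
pose P x := exists e, [/\ E e, e != 0 & x = exps e].
have [s [Hs1 Hs2]] := dickson n P.
have [G [HG1 HG2]] : exists G : seq S, (forall g, g \in G -> E g /\ g != 0) /\
    (forall y, y \in s -> exists2 g, g \in G & y = exps g).
  elim: s Hs1 {Hs2} => [|y s IH] H; first by exists [::].
  have [[e [Ee enz ->]] _] := H y (mem_head _ _).
  have [G [HG1 HG2]] : exists G : seq S, (forall g, g \in G -> E g /\ g != 0) /\
      (forall y, y \in s -> exists2 g, g \in G & y = exps g).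
    by apply: IH => x hx; apply: H; rewrite in_cons hx orbT.
  exists (e :: G); split; first by move=> g; rewrite in_cons => /orP [/eqP ->|/HG1].
  move=> y'; rewrite in_cons => /orP [/eqP ->|/HG2 [g hg ->]].
    by exists e; rewrite ?mem_head.
  by exists g; rewrite // in_cons hg orbT.
exists G; split => // e Ee enz.
have [y hy ley] := Hs2 (exps e) (ex_intro _ e (And3 Ee enz erefl)) (size_tuple _).
have [g hg yE] := HG2 y hy; exists g => //.
by apply/mnm_lepP => i; rewrite !(mnm_nth 0); have := ley i; rewrite yE.
Qed.

Lemma groebner_basis_exists (E : S -> Prop) : exists G, groebner_basis le E G.
Proof.
have [G [HG cover]] := lm_cover_exists E.
by exists G; exact: cover_groebner_basis.
Qed.

(* The f-half of S(f,g): S(f,g) = spoly_half f g - spoly_half g f. *)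
Definition spoly_half (f g : S) : S :=
  ((lc le f)^-1 *: 'X_[(mlcm (lm le f) (lm le g) - lm le f)%MM]) * f.

(* If in(g) divides in(h), then lcm(in f, in h) / in f is a multiple of
   lcm(in f, in g) / in f, so the f-half of S(f,h) is a monomial multiple of
   the f-half of S(f,g). *)
Lemma spoly_half_dvd (f g h : S) : (lm le g <= lm le h)%MM ->
  exists m : mon, spoly_half f h = 'X_[m] * spoly_half f g.
Proof.
move=> leg; set A := (mlcm (lm le f) (lm le g) - lm le f)%MM.
set B := (mlcm (lm le f) (lm le h) - lm le f)%MM.
have AB : (A <= B)%MM.
  apply/mnm_lepP => i; rewrite /A /B !mnmBE /mlcm !mnmE.
  apply: leq_sub2r; rewrite geq_max leq_maxl /=.
  exact: leq_trans (mnm_lepP leg i) (leq_maxr _ _).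
by exists (B - A)%MM; rewrite /spoly_half -/A -/B mulrA -scalerAr -mpolyXD submK.
Qed.

Lemma S_nice_of_cover (E : S -> Prop) (GJ G : seq S) :
  is_ideal E -> (forall g, g \in G -> E g) -> lm_cover E G ->
  (forall f g, f \in GJ -> g \in G -> E (spoly le f g)) -> S_nice le GJ E.
Proof.
move=> HE EG cover Hc f h fin Eh hnz.
have [_ HD HM] := HE.
have [g gin leg] := cover h Eh hnz.
have half_g : E (spoly_half f g).
  pose r := (lc le g)^-1 *: 'X_[(mlcm (lm le f) (lm le g) - lm le g)%MM].
  have := HD _ _ (Hc f g fin gin) (HM r _ (EG g gin)).
  by rewrite /spoly subrK.
rewrite /spoly -/(spoly_half f h); have [m ->] := spoly_half_dvd f leg.
by apply: HD; [exact: HM | apply: idealN => //; exact: HM].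
Qed.

End Groebner.

Theorem mainTheorem15 (K : fieldType) (n : nat) (le : rel 'X_{1..n})
    (J E : {mpoly K[n]} -> Prop) (GJ : seq {mpoly K[n]}) :
  monomial_order le -> is_ideal J -> is_ideal E -> groebner_basis le J GJ ->
  (S_nice le GJ E <->
     (forall GE, groebner_basis le E GE ->
        forall f g, f \in GJ -> g \in GE -> E (spoly le f g))) /\
  ((forall GE, groebner_basis le E GE ->
        forall f g, f \in GJ -> g \in GE -> E (spoly le f g)) <->
     (exists GE, groebner_basis le E GE /\
        forall f g, f \in GJ -> g \in GE -> E (spoly le f g))).
Proof.
move=> _ _ HE _.
have [G0 HG0] := groebner_basis_exists le E.
have c_to_a GE : groebner_basis le E GE ->
    (forall f g, f \in GJ -> g \in GE -> E (spoly le f g)) -> S_nice le GJ E.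
  move=> HGE; apply: S_nice_of_cover HE _ (groebner_basis_cover HGE).
  by move=> g /(proj1 HGE) [].
have a_to_b : S_nice le GJ E -> forall GE, groebner_basis le E GE ->
    forall f g, f \in GJ -> g \in GE -> E (spoly le f g).
  by move=> Ha GE [HG _] f g fin /HG [Eg gnz]; exact: Ha.
split; split.
- exact: a_to_b.
- by move=> Hb; exact: c_to_a HG0 (Hb G0 HG0).
- by move=> Hb; exists G0; split => //; exact: Hb.
- by move=> [GE [HGE Hc]]; apply: a_to_b; exact: c_to_a HGE Hc.
Qed.
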